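(* Let $(M_t)_{t\ge0}$ be a pure-jump Lévy process with characteristic function $E[e^{iuM_t}]=\exp\big(t\int_{-1}^1(e^{iux}-1-iux)\,\mu(dx)\big)$, where the Lévy measure $\mu$ satisfies $\operatorname{supp}(\mu)\subset[-1,1]$ and there exists $\alpha\in(0,2)$ with $\int_{-v}^vx^2\,\mu(dx)=O(v^{2-\alpha})$ as $v\downarrow0$. Let $f\in C^\infty(\mathbb R)$ satisfy $f(x)=x^2$ for $|x|\le1$, $f(x)=0$ for $|x|>2$ and $f(x)\in[0,2]$ for $1<|x|\le2$, and set $f^v(x)=v^2f(x/v)$ for $v>0$. Then for all $\beta\in(0,1/2)$, $$E\big[f^{t^\beta}(M_t)\big]=O\big(t^{1+\beta(2-\alpha)}\big)\quad\text{as }t\downarrow0.$$ *)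

From HB Require Import structures.
From mathcomp Require Import all_boot all_order all_algebra.
From mathcomp Require Import all_classical all_reals all_analysis.
Set Implicit Arguments. Unset Strict Implicit. Unset Printing Implicit Defensive.
Import Order.TTheory GRing.Theory Num.Theory.
Import numFieldNormedType.Exports.
Local Open Scope classical_set_scope.
Local Open Scope ring_scope.

Section Defs.
Context {R : realType}.

Definition smooth (f : R -> R) : Prop :=
  forall (n : nat) (x : R), derivable (derive1n n f) x 1.

Definition rescale (f : R -> R) (v : R) : R -> R := fun x => v ^+ 2 * f (x / v).

Definition levy_measure (mu : {measure set R -> \bar R}) : Prop :=
  mu [set 0] = 0%E /\
  (\int[mu]_(x in setT) (Num.min 1 (x ^+ 2))%:E < +oo)%E.

Definition supp_in_unit (mu : {measure set R -> \bar R}) : Prop :=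
  mu (~` `[-1, 1]) = 0%E.

(* Re and Im parts of psi(u) = \int_{-1}^{1} (e^{iux} - 1 - iux) mu(dx) *)
Definition psi_re (mu : {measure set R -> \bar R}) (u : R) : R :=
  Rintegral mu `[-1, 1] (fun x => cos (u * x) - 1).
Definition psi_im (mu : {measure set R -> \bar R}) (u : R) : R :=
  Rintegral mu `[-1, 1] (fun x => sin (u * x) - u * x).

Context {d : measure_display} {T : measurableType d} (P : probability T R).

(* E[e^{iuX}] = exp(t psi(u)), written out via real and imaginary parts:
   E[cos(uX)] + i E[sin(uX)] = e^{t Re psi(u)} (cos(t Im psi(u)) + i sin(t Im psi(u))) *)
Definition has_levy_charfun (mu : {measure set R -> \bar R}) (t : R) (X : T -> R) : Prop :=
  forall u : R,
    Rintegral P setT (fun w => cos (u * X w)) = expR (t * psi_re mu u) * cos (t * psi_im mu u) /\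
    Rintegral P setT (fun w => sin (u * X w)) = expR (t * psi_re mu u) * sin (t * psi_im mu u).

Definition levy_process (M : R -> T -> R) : Prop :=
  (forall t, 0 <= t -> measurable_fun setT (M t)) /\
  P [set w | M 0 w != 0] = 0%E /\
  (forall s t (B : set R), 0 <= s -> 0 <= t -> measurable B ->
     P [set w | M (t + s) w - M s w \in B] = P [set w | M t w \in B]) /\
  (forall (n : nat) (ts : nat -> R) (B : nat -> set R),
     0 <= ts 0%N -> (forall i, (i < n)%N -> ts i <= ts i.+1) ->
     (forall i, measurable (B i)) ->
     P (\big[setI/setT]_(i < n) [set w | M (ts i.+1) w - M (ts i) w \in B i])
     = (\prod_(i < n) P [set w | (M (ts i.+1) w - M (ts i) w)%R \in B i])%E) /\
  (exists N : set T, measurable N /\ P N = 0%E /\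
     forall w, ~ N w -> forall t, 0 <= t ->
       ((fun s => M s w) x @[x --> t^'+] --> M t w) /\
       (0 < t -> cvg ((fun s => M s w) x @[x --> t^'-]))).

End Defs.

(* Since [0 <= f y <= 6 (1 - cos y)], with [v = t^beta] and [u = 1/v],
   [E f^v(M_t) <= 6 v^2 (1 - E cos(u M_t)) = 6 v^2 (1 - e^(t Re psi(u)) cos(t Im psi(u)))
              <= 6 v^2 (- t Re psi(u) + (t Im psi(u))^2 / 2)].
   The growth hypothesis on the Levy measure yields, by summing over dyadic scales,
   [int min(1, (u x)^2) mu(dx) = O(u^alpha)], hence [|Re psi(u)| = O(u^alpha)]; splitting
   [|x| <= e + x^2/e] with [e = u^(-alpha/2)] gives [|Im psi(u)| = O(u^(1 + alpha/2))].
   The two resulting terms are [O(t^(1 + beta(2 - alpha)))] and [O(t^(2 - alpha beta))],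
   and the second is the smaller one because [beta < 1/2]. *)

From HB Require Import structures.
From mathcomp Require Import all_boot all_order all_algebra.
From mathcomp Require Import all_classical all_reals all_analysis.
From mathcomp Require Import measurable_realfun ring lra.
Set Implicit Arguments. Unset Strict Implicit. Unset Printing Implicit Defensive.
Import Order.TTheory GRing.Theory Num.Theory.
Import numFieldNormedType.Exports.
Local Open Scope classical_set_scope.
Local Open Scope ring_scope.

Section elementary_bounds.
Variable R : realType.
Implicit Types x y : R.

Definition truncsqr y : R := Num.min 1 (y ^+ 2).

Lemma truncsqr_ge0 y : 0 <= truncsqr y.
Proof. by rewrite le_min ler01 sqr_ge0. Qed.

Lemma truncsqr_le1 y : truncsqr y <= 1.
Proof. by rewrite ge_min lexx. Qed.

Lemma truncsqr_le_sqr y : truncsqr y <= y ^+ 2.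
Proof. by rewrite ge_min lexx orbT. Qed.

Lemma truncsqr_small y : `|y| <= 1 -> truncsqr y = y ^+ 2.
Proof.
move=> y1; apply/min_idPr.
by rewrite -(real_normK (num_real y)) -(expr1n _ 2) ler_pXn2r ?nnegrE.
Qed.

Lemma truncsqr_large y : 1 <= `|y| -> truncsqr y = 1.
Proof.
move=> y1; apply/min_idPl.
by rewrite -(real_normK (num_real y)) -(expr1n _ 2) ler_pXn2r ?nnegrE.
Qed.

Lemma is_derive_ge0_le (g dg : R -> R) :
  (forall x, is_derive x 1 g (dg x)) -> (forall x, 0 <= x -> 0 <= dg x) ->
  forall y, 0 <= y -> g 0 <= g y.
Proof.
move=> g_dg dg_ge0 y y_ge0.
have g_der x : derivable g x 1 by apply: ex_derive; exact: g_dg.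
apply: (@ger0_derive1_ndecry R g 0) => //.
- move=> x; rewrite in_itv /= andbT => /ltW x_ge0.
  by rewrite derive1E derive_val; exact: dg_ge0.
- by apply: derivable_within_continuous => x _; exact: g_der.
Qed.

Lemma sin_le_id y : 0 <= y -> sin y <= y.
Proof.
move=> y_ge0; suff : 0 - sin 0 <= y - sin y by rewrite sin0; lra.
by apply: (@is_derive_ge0_le (fun x => x - sin x) (fun x => 1 - cos x)).
Qed.

Lemma one_sub_cos_le y : 1 - cos y <= y ^+ 2 / 2.
Proof.
wlog y_ge0 : y / 0 <= y.
  move=> ge0_le; rewrite -cos_norm -(real_normK (num_real y)).
  exact: ge0_le.
suff : cos 0 - 1 + 0 ^+ 2 / 2 <= cos y - 1 + y ^+ 2 / 2 by rewrite cos0; lra.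
apply: (@is_derive_ge0_le (fun x => cos x - 1 + x ^+ 2 / 2) (fun x => x - sin x))
  => // [x|x x_ge0].
- by apply: is_derive_eq; rewrite /GRing.scale /=; field.
- by rewrite subr_ge0 sin_le_id.
Qed.

Lemma id_sub_sin_le y : 0 <= y -> y - sin y <= y ^+ 3 / 6.
Proof.
move=> y_ge0.
suff : sin 0 - 0 + 0 ^+ 3 / 6 <= sin y - y + y ^+ 3 / 6 by rewrite sin0; lra.
apply: (@is_derive_ge0_le (fun x => sin x - x + x ^+ 3 / 6)
   (fun x => cos x - 1 + x ^+ 2 / 2)) => // [x|x _].
- by apply: is_derive_eq; rewrite /GRing.scale /=; field.
- by have := one_sub_cos_le x; lra.
Qed.

Lemma cos_le_quartic y : cos y <= 1 - y ^+ 2 / 2 + y ^+ 4 / 24.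
Proof.
wlog y_ge0 : y / 0 <= y.
  move=> ge0_le; rewrite -cos_norm -(real_normK (num_real y)).
  have -> : y ^+ 4 = `|y| ^+ 4 by rewrite -normrX ger0_norm// exprn_even_ge0.
  exact: ge0_le.
suff : 1 - 0 ^+ 2 / 2 + 0 ^+ 4 / 24 - cos 0 <= 1 - y ^+ 2 / 2 + y ^+ 4 / 24 - cos y.
  by rewrite cos0; lra.
apply: (@is_derive_ge0_le (fun x => 1 - x ^+ 2 / 2 + x ^+ 4 / 24 - cos x)
   (fun x => sin x - x + x ^+ 3 / 6)) => // [x|x x_ge0].
- by apply: is_derive_eq; rewrite /GRing.scale /=; field.
- by have := id_sub_sin_le x_ge0; lra.
Qed.

Lemma one_sub_cos_le_truncsqr y : 1 - cos y <= 2 * truncsqr y.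
Proof.
have := one_sub_cos_le y; have := cos_geN1 y; have := sqr_ge0 y.
by rewrite /truncsqr /Num.min; case: ifP => _; lra.
Qed.

(* The cubic Taylor bound near 0, and [|sin y| <= 1 <= |y|] away from it. *)
Lemma norm_sin_sub_id_le y : `|sin y - y| <= 2 * `|y| * truncsqr y.
Proof.
have [y1|y1] := leP `|y| 1; last first.
  rewrite truncsqr_large ?(ltW y1)// mulr1 mulr2n mulrDl mul1r.
  apply: (le_trans (ler_normB _ _)); rewrite lerD2r.
  exact: le_trans (sin_max _) (ltW y1).
rewrite truncsqr_small//.
wlog y_ge0 : y y1 / 0 <= y.
  move=> ge0_le; have [|y_lt0] := leP 0 y; first exact: ge0_le.
  have := ge0_le (- y); rewrite !normrN sinN sqrrN -opprD normrN.
  by apply=> //; rewrite oppr_ge0 ltW.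
rewrite (ger0_norm y_ge0) in y1 *.
rewrite ler0_norm ?subr_le0 ?sin_le_id// opprB.
apply: (le_trans (id_sub_sin_le y_ge0)).
have := sqr_ge0 y; rewrite exprS; nra.
Qed.

(* AM-GM [|x| <= e + x^2/e] trades the factor [|x|] for a free parameter [e]. *)
Lemma norm_sin_sub_id_scale_le s e x : 0 <= s -> 0 < e ->
  `|sin (s * x) - s * x| <= 2 * s * e * truncsqr (s * x) + 2 * s * x ^+ 2 / e.
Proof.
move=> s_ge0 e_gt0; apply: (le_trans (norm_sin_sub_id_le _)).
rewrite normrM (ger0_norm s_ge0).
have x_le : `|x| <= e + x ^+ 2 / e.
  rewrite -(ler_pM2r e_gt0) mulrDl mulfVK ?gt_eqF// -(real_normK (num_real x)).
  by have := sqr_ge0 (`|x| - e); nra.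
have := truncsqr_ge0 (s * x); have := truncsqr_le1 (s * x).
have : 0 <= x ^+ 2 / e by rewrite divr_ge0 ?sqr_ge0 ?ltW.
rewrite -[2 * s * x ^+ 2 / e]mulrA; move: x_le.
move: (truncsqr (s * x)) (x ^+ 2 / e) => t q x_le q_ge0 t_le1 t_ge0.
have st_ge0 : 0 <= s * t by rewrite mulr_ge0.
have := ler_wpM2l st_ge0 x_le; have := ler_wpM2l (mulr_ge0 s_ge0 q_ge0) t_le1.
nra.
Qed.

Lemma bump_le_one_sub_cos (f : R -> R) :
  (forall x, `|x| <= 1 -> f x = x ^+ 2) ->
  (forall x, 2 < `|x| -> f x = 0) ->
  (forall x, 1 < `|x| <= 2 -> 0 <= f x <= 2) ->
  forall y, 0 <= f y <= 6 * (1 - cos y).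
Proof.
move=> f_small f_large f_mid y.
have := cos_le_quartic y; have := cos_le1 y.
have -> : y ^+ 4 = (`|y| ^+ 2) ^+ 2 by rewrite real_normK ?num_real// -exprM.
rewrite -(real_normK (num_real y)); set u := `|y| ^+ 2 => cos_le1' cos_le.
have [y1|y1] := leP `|y| 1.
  have u1 : u <= 1 by rewrite /u -(expr1n _ 2) ler_pXn2r ?nnegrE.
  rewrite f_small// sqr_ge0 -(real_normK (num_real y)) -/u /=.
  have := sqr_ge0 `|y|; rewrite -/u; nra.
have [y2|y2] := leP `|y| 2; last first.
  by rewrite f_large// lexx mulr_ge0// subr_ge0.
have /andP[f_ge0 f_le2] := f_mid y (introT andP (conj y1 y2)).
have u1 : 1 <= u by rewrite /u -(expr1n _ 2) ler_pXn2r ?nnegrE// ltW.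
have u4 : u <= 4.
  by rewrite /u (_ : 4 = 2 ^+ 2) ?ler_pXn2r ?nnegrE// expr2; lra.
by rewrite f_ge0 /=; nra.
Qed.

Lemma one_sub_expR_cos_le (a b : R) :
  a <= 0 -> 1 - expR a * cos b <= - a + b ^+ 2 / 2.
Proof.
move=> a_le0.
have := expR_ge1Dx a; have := one_sub_cos_le b; have := cos_le1 b.
have : expR a <= 1 by rewrite expR_le1.
have := expR_gt0 a; nra.
Qed.

End elementary_bounds.

Section integral_bounds.
Context {R : realType} {d : measure_display} {T : measurableType d}.
Variable mu : {measure set T -> \bar R}.

Lemma integrable_norm_Rintegral_le (D : set T) (g h : T -> R) (B : R) :
  measurable D -> measurable_fun D g -> measurable_fun D h ->
  (forall x, D x -> `|g x| <= h x) ->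
  (\int[mu]_(x in D) (h x)%:E <= B%:E)%E ->
  mu.-integrable D (EFin \o g) /\ `|Rintegral mu D g| <= B.
Proof.
move=> mD mg mh gh hB.
have h_ge0 x : D x -> 0 <= h x by move=> Dx; exact: le_trans (gh x Dx).
have ih : mu.-integrable D (EFin \o h).
  apply/integrableP; split; first exact/measurable_EFinP.
  apply: le_lt_trans (ltry B); apply: le_trans hB.
  apply: ge0_le_integral => //.
  - by apply: measurableT_comp => //; exact/measurable_EFinP.
  - exact/measurable_EFinP.
  - by move=> x Dx /=; rewrite lee_fin ger0_norm// h_ge0.
have ig : mu.-integrable D (EFin \o g).
  apply: le_integrable ih => //; first exact/measurable_EFinP.
  by move=> x Dx /=; rewrite lee_fin (ger0_norm (h_ge0 x Dx)); exact: gh.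
split=> //; rewrite -lee_fin; apply: le_trans hB.
rewrite /Rintegral -[`|_|%:E]/(`|(fine _)%:E|%E) fineK ?integrable_fin_num//.
apply: (le_trans (le_abse_integral _ mD _)); first exact/measurable_EFinP.
apply: ge0_le_integral => //.
- by apply: measurableT_comp => //; exact/measurable_EFinP.
- exact/measurable_EFinP.
Qed.

End integral_bounds.

Section rescaled_expectation.
Context {R : realType} {d : measure_display} {T : measurableType d}.
Variable P : probability T R.

Lemma integrable_cos (X : T -> R) : measurable_fun setT X ->
  P.-integrable setT (EFin \o (fun w => cos (X w))).
Proof.
move=> mX.
have mcos : measurable_fun setT (fun w => cos (X w)).
  apply: (measurableT_comp (f := cos)) => //.
  exact: continuous_measurable_fun (@continuous_cos R).
have [] // := @integrable_norm_Rintegral_le _ _ _ P setT _ (cst 1) 1 measurableT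
  mcos (measurable_cst _) (fun w _ => cos_max _).
change (\int[P]_(w in setT) cst 1%E w <= 1%E)%E.
by rewrite integral_cst// mul1e probability_le1.
Qed.

Lemma expectation_rescale_le (f : R -> R) (X : T -> R) (v : R) :
  measurable_fun setT f -> measurable_fun setT X ->
  (forall y, 0 <= f y <= 6 * (1 - cos y)) -> 0 < v ->
  (`| \int[P]_(w in setT) (rescale f v (X w))%:E |
     <= (6 * v ^+ 2 * (1 - Rintegral P setT (fun w => cos (v^-1 * X w))))%:E)%E.
Proof.
move=> mf mX f_le v_gt0.
have mY : measurable_fun setT (fun w => v^-1 * X w).
  exact: measurable_funM.
have mg : measurable_fun setT (fun w => rescale f v (X w)).
  apply: measurable_funM => //; apply: (measurableT_comp mf).
  exact: measurable_funM.
have icos := integrable_cos mY.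
have mcos := measurable_int _ icos.
have g_ge0 w : 0 <= rescale f v (X w).
  by rewrite /rescale mulr_ge0 ?sqr_ge0//; case/andP: (f_le (X w / v)).
rewrite gee0_abs; last by apply: integral_ge0 => w _; rewrite lee_fin g_ge0.
apply: (@le_trans _ _ (\int[P]_(w in setT) (6 * v ^+ 2 * (1 - cos (v^-1 * X w)))%:E)%E).
  apply: ge0_le_integral => //.
  - by move=> w _; rewrite lee_fin g_ge0.
  - exact/measurable_EFinP.
  - apply/measurable_EFinP; apply: measurable_funM => //.
    by apply: measurable_funB => //; exact/measurable_EFinP.
  - move=> w _; rewrite lee_fin /rescale [v^-1 * _]mulrC [6 * _]mulrC -[_ * 6 * _]mulrA.
    apply: ler_wpM2l; first exact: sqr_ge0.
    by case/andP: (f_le (X w / v)).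
under eq_integral do rewrite EFinM EFinB.
rewrite integralZl//; last first.
  by apply: integrableB => //; exact: finite_measure_integrable_cst.
rewrite integralB_EFin//; last exact: finite_measure_integrable_cst.
rewrite integral_cst// (_ : (1 * _)%E = 1%E); last first.
  by rewrite mul1e; exact: probability_setT.
by rewrite [leRHS]EFinM EFinB /Rintegral fineK ?integrable_fin_num.
Qed.

End rescaled_expectation.

Section powR_facts.
Context {R : realType}.
Implicit Types x r q : R.

Lemma powRV x r : 0 < x -> x^-1 `^ r = (x `^ r)^-1.
Proof. by move=> x_gt0; rewrite /powR invr_eq0 gt_eqF// lnV ?posrE// mulrN expRN. Qed.

Lemma gt0_powRD x r q : 0 < x -> x `^ (r + q) = x `^ r * x `^ q.
Proof. by move=> x_gt0; apply: powRD; apply/implyP => _; rewrite gt_eqF. Qed.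

Lemma sqr_powR_split x r : 0 < x -> x ^+ 2 = x `^ r * x `^ (2 - r).
Proof. by move=> x_gt0; rewrite -gt0_powRD// addrC subrK -powR_mulrn ?ltW. Qed.

Lemma sqr_powR x r : 0 <= x -> (x `^ r) ^+ 2 = x `^ (2 * r).
Proof. by move=> x_ge0; rewrite -powR_mulrn ?powR_ge0// -powRrM mulrC. Qed.

Lemma sqr_mul_powR_div x r : 0 < x -> x ^+ 2 * (2 / x) `^ (2 - r) = 4 * (x / 2) `^ r.
Proof.
move=> x_gt0; have x_ge0 := ltW x_gt0.
have four : 4 = 2 `^ r * 2 `^ (2 - r) :> R by rewrite -sqr_powR_split// expr2; lra.
rewrite !powRM ?invr_ge0// !powRV// (sqr_powR_split r x_gt0) four.
have := powR_gt0 r (ltr0Sn R 1); have := powR_gt0 (2 - r) x_gt0.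
by move=> *; field; rewrite !gt_eqF.
Qed.

(* With [v = t^beta] and [u = 1/v], [-a = O(u^alpha)] and [b = O(u^(1 + alpha/2))]:
   the second-order term is [O(t^(2 - alpha beta))], dominated because [2 beta <= 1]. *)

Lemma rescaled_defect_le (t beta alpha A B a b : R) :
  0 < t < 1 -> 2 * beta <= 1 -> a <= 0 ->
  - a <= A * t `^ (- beta * alpha) ->
  `|b| <= B * t `^ (- beta * (1 + alpha / 2)) ->
  6 * (t `^ beta) ^+ 2 * (1 - expR (t * a) * cos (t * b)) <=
  (6 * A + 3 * B ^+ 2) * t `^ (1 + beta * (2 - alpha)).
Proof.
move=> /andP[t_gt0 t_lt1] beta_le a_le0 a_le b_le.
set Y := t `^ (- beta * alpha) in a_le *.
set X := t `^ (- beta * (1 + alpha / 2)) in b_le *.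
set T := t `^ (1 + beta * (2 - alpha)).
have t_ge0 : 0 <= t := ltW t_gt0.
have v2_ge0 : 0 <= 6 * (t `^ beta) ^+ 2 by rewrite mulr_ge0// sqr_ge0.
have ta_le : - (t * a) <= t * (A * Y) by rewrite -mulrN ler_wpM2l// ltW.
have tb_le : (t * b) ^+ 2 <= t ^+ 2 * (B * X) ^+ 2.
  rewrite exprMn ler_wpM2l ?sqr_ge0// -(real_normK (num_real b)).
  by rewrite ler_pXn2r ?nnegrE// (le_trans _ b_le).
have first_order : (t `^ beta) ^+ 2 * (t * Y) = T.
  rewrite /Y /T sqr_powR// -{2}(powRr1 t_ge0) -!gt0_powRD//.
  by congr (_ `^ _); ring.
have second_order : (t `^ beta) ^+ 2 * (t ^+ 2 * X ^+ 2) <= T.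
  rewrite /X /T !sqr_powR// -powR_mulrn// -!gt0_powRD//.
  by apply: ger_powR; [rewrite t_gt0 ltW|nra].
have ta_le0 : t * a <= 0 by rewrite pmulr_rle0.
apply: le_trans (ler_wpM2l v2_ge0 (one_sub_expR_cos_le (t * b) ta_le0)) _.
apply: le_trans (ler_wpM2l v2_ge0
  (_ : _ <= t * (A * Y) + t ^+ 2 * (B * X) ^+ 2 / 2)) _; first lra.
have -> : 6 * (t `^ beta) ^+ 2 * (t * (A * Y) + t ^+ 2 * (B * X) ^+ 2 / 2) =
    6 * A * ((t `^ beta) ^+ 2 * (t * Y)) +
    3 * B ^+ 2 * ((t `^ beta) ^+ 2 * (t ^+ 2 * X ^+ 2)) by field.
rewrite first_order [leRHS]mulrDl lerD2l.
by apply: ler_wpM2l second_order; rewrite mulr_ge0 ?sqr_ge0.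
Qed.

End powR_facts.
Lemma dyadic_ind {R : realType} (Q : R -> Prop) (b : R) : 0 < b ->
  (forall s, 0 < s <= b -> Q s) -> (forall s, b < s -> Q (s / 2) -> Q s) ->
  forall s, 0 < s -> Q s.
Proof.
move=> b_gt0 Qsmall Qhalf.
suff Qn n : forall s, 0 < s <= 2 ^+ n * b -> Q s.
  move=> s s_gt0; apply: (Qn (Num.Def.archi_bound (s / b))); rewrite s_gt0 /=.
  rewrite -ler_pdivrMr// (le_trans (ltW (archi_boundP _)))// ?divr_ge0 ?ltW//.
  by rewrite -natrX ltr_nat ltn_expl.
elim: n => [|n IHn] s /andP[s_gt0 s_le]; first by apply: Qsmall; rewrite s_gt0 -[b]mul1r.
have [s_le_b|b_lt_s] := leP s b; first by apply: Qsmall; rewrite s_gt0.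
apply: Qhalf => //; apply: IHn; rewrite divr_gt0//=.
by rewrite ler_pdivrMr// mulrAC -exprSr.
Qed.

Section levy_measure_bounds.
Context {R : realType}.
Variable mu : {measure set R -> \bar R}.
Implicit Types (s x : R) (D : set R).
Local Notation I := (`[(-1)%R, 1%R]%classic : set R).

Lemma measurable_truncsqr D : measurable_fun D (@truncsqr R).
Proof.
apply: measurable_funTS; apply: measurable_minr; first exact: measurable_cst.
by apply: measurable_funX; exact: measurable_id.
Qed.

Lemma measurable_truncsqr_scale D s : measurable_fun D (fun x => truncsqr (s * x)).
Proof.
apply: measurable_funTS; apply: measurable_minr; first exact: measurable_cst.
by apply: measurable_funX; exact: measurable_funM.
Qed.

Lemma measurable_sqr_scale D s : measurable_fun D (fun x => (s * x) ^+ 2).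
Proof. by apply: measurable_funTS; apply: measurable_funX; exact: measurable_funM. Qed.

Lemma integral_sqr_scale D s : measurable D ->
  (\int[mu]_(x in D) ((s * x) ^+ 2)%:E = (s ^+ 2)%:E * \int[mu]_(x in D) (x ^+ 2)%:E)%E.
Proof.
move=> mD; under eq_integral do rewrite exprMn EFinM.
rewrite ge0_integralZl_EFin ?sqr_ge0//.
- by move=> x _; rewrite lee_fin sqr_ge0.
- by apply/measurable_EFinP; apply: measurable_funX; exact: measurable_id.
Qed.

Lemma truncsqr_le_doubling s x : 0 < s ->
  truncsqr (s * x) <=
    (if x \in `[- (2 / s), 2 / s] then (s * x) ^+ 2 else 0) + truncsqr (s / 2 * x).
Proof.
move=> s_gt0; case: ifPn => [_|xJ].
  by rewrite -[leLHS]addr0 lerD ?truncsqr_le_sqr ?truncsqr_ge0.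
rewrite add0r [X in _ <= X]truncsqr_large ?truncsqr_le1//.
move: xJ; rewrite in_itv /= negb_and -!ltNge normrM gtr0_norm ?divr_gt0// => x_out.
have b_gt0 : 0 < 2 / s by rewrite divr_gt0.
have x_gt : 2 / s < `|x|.
  by case/orP: x_out => x_out; [rewrite ltr0_norm|rewrite gtr0_norm]; lra.
rewrite [leLHS](_ : 1 = s / 2 * (2 / s)); last by field; rewrite gt_eqF.
by apply: ler_wpM2l; rewrite ?divr_ge0 ?ltW.
Qed.

Lemma truncated_moment_doubling s : 0 < s ->
  (\int[mu]_(x in I) (truncsqr (s * x))%:E <=
   \int[mu]_(x in `[(- (2 / s))%R, (2 / s)%R]) ((s * x) ^+ 2)%:E +
   \int[mu]_(x in I) (truncsqr (s / 2 * x))%:E)%E.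
Proof.
move=> s_gt0.
set J := `[(- (2 / s))%R, (2 / s)%R]%classic.
pose g := (EFin \o (fun x => (s * x) ^+ 2)) \_ J.
have mg : measurable_fun setT g.
  apply/(measurable_restrictT _ (measurable_itv _)).
  by apply/measurable_EFinP; exact: measurable_sqr_scale.
have g_ge0 x : (0 <= g x)%E.
  by rewrite /g /patch; case: ifP => _ //=; rewrite lee_fin sqr_ge0.
have mt (D : set R) t : measurable_fun D (EFin \o fun x => truncsqr (t * x)).
  by apply/measurable_EFinP; exact: measurable_truncsqr_scale.
apply: (@le_trans _ _ (\int[mu]_(x in I) (g x + (truncsqr (s / 2 * x))%:E))%E).
  apply: ge0_le_integral => //.
  - by move=> x _; rewrite lee_fin truncsqr_ge0.
  - exact: mt.
  - by apply: emeasurable_funD; [exact: measurable_funTS|exact: mt].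
  - move=> x _; have := truncsqr_le_doubling x s_gt0.
    by rewrite /g /patch mem_setE; case: ifP.
rewrite ge0_integralD//; last 3 first.
- exact: measurable_funTS.
- by move=> x _; rewrite lee_fin truncsqr_ge0.
- exact: mt.
apply: leeD => //; rewrite [leRHS]integral_mkcond.
exact: ge0_subset_integral.
Qed.

Lemma truncated_moment_le_sqr s L :
  (\int[mu]_(x in I) (x ^+ 2)%:E <= L%:E)%E ->
  (\int[mu]_(x in I) (truncsqr (s * x))%:E <= (s ^+ 2 * L)%:E)%E.
Proof.
move=> moment_le; apply: (@le_trans _ _ (\int[mu]_(x in I) ((s * x) ^+ 2)%:E)%E).
  apply: ge0_le_integral => //.
  - by move=> x _; rewrite lee_fin truncsqr_ge0.
  - by apply/measurable_EFinP; exact: measurable_truncsqr_scale.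
  - by apply/measurable_EFinP; exact: measurable_sqr_scale.
  - by move=> x _; rewrite lee_fin truncsqr_le_sqr.
by rewrite integral_sqr_scale// [leRHS]EFinM; apply: lee_wpmul2l; rewrite ?lee_fin ?sqr_ge0.
Qed.

(* Geometric summation over dyadic scales: doubling [s] multiplies the bound by
   [2^alpha > 1], which absorbs the [C s^alpha]-sized contribution of each scale. *)
Lemma truncated_moment_le_pow (alpha C delta L : R) :
  0 < alpha < 2 -> 0 < delta ->
  (forall v, 0 < v < delta ->
     (\int[mu]_(x in `[(- v)%R, v]) (x ^+ 2)%:E <= (C * v `^ (2 - alpha))%:E)%E) ->
  (\int[mu]_(x in I) (x ^+ 2)%:E <= L%:E)%E ->
  exists K, forall s, 0 < s ->
    (\int[mu]_(x in I) (truncsqr (s * x))%:E <= (K * s `^ alpha)%:E)%E.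
Proof.
move=> /andP[alpha_gt0 alpha_lt2] delta_gt0 small_moment moment_le.
have L_ge0 : 0 <= L.
  rewrite -lee_fin; apply: le_trans moment_le.
  by apply: integral_ge0 => x _; rewrite lee_fin sqr_ge0.
set a := 2 `^ alpha.
have a_gt1 : 1 < a.
  by rewrite /a /powR pnatr_eq0 /= expR_gt1 mulr_gt0// ln_gt0// ltr1n.
set b := 2 / delta; have b_gt0 : 0 < b by rewrite divr_gt0.
set K := Num.max (L * b `^ (2 - alpha)) (4 * C / (a - 1)).
have K_small : L * b `^ (2 - alpha) <= K by rewrite le_max lexx.
have K_large : 4 * C + K <= K * a.
  have : 4 * C / (a - 1) <= K by rewrite le_max lexx orbT.
  by rewrite ler_pdivrMr ?subr_gt0//; lra.
exists K; apply: (dyadic_ind b_gt0) => [s /andP[s_gt0 s_le_b]|s b_lt_s half_bound].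
  apply: le_trans (truncated_moment_le_sqr s moment_le) _.
  rewrite lee_fin (sqr_powR_split alpha s_gt0) -mulrA mulrC.
  apply: ler_wpM2r; first exact: powR_ge0.
  apply: (@le_trans _ _ (L * b `^ (2 - alpha))) => //.
  rewrite mulrC; apply: ler_wpM2l => //.
  by apply: ge0_ler_powR => //; rewrite ?nnegrE ?subr_ge0 ?ltW.
have s_gt0 : 0 < s by exact: lt_trans b_lt_s.
have small_s : 0 < 2 / s < delta.
  by rewrite divr_gt0//= ltr_pdivrMr// mulrC -ltr_pdivrMr.
apply: (le_trans (truncated_moment_doubling s_gt0)).
rewrite integral_sqr_scale//.
apply: le_trans (leeD (lee_wpmul2l _ (small_moment _ small_s)) half_bound) _.
  by rewrite lee_fin sqr_ge0.
rewrite -EFinM -EFinD lee_fin mulrCA sqr_mul_powR_div//.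
have -> : s `^ alpha = a * (s / 2) `^ alpha.
  rewrite powRM ?invr_ge0 ?ltW// powRV// mulrCA divff ?mulr1//.
  by rewrite gt_eqF// (lt_trans ltr01).
have := powR_ge0 (s / 2) alpha; nra.
Qed.

Lemma psi_re_bounds s B :
  (\int[mu]_(x in I) (truncsqr (s * x))%:E <= B%:E)%E ->
  psi_re mu s <= 0 /\ - psi_re mu s <= 2 * B.
Proof.
move=> moment_le.
have mcos : measurable_fun I (fun x : R => cos (s * x) - 1).
  apply: measurable_funB => //; apply: (measurableT_comp (f := cos)) => //.
  exact: continuous_measurable_fun (@continuous_cos R).
have mh : measurable_fun I (fun x => 2 * truncsqr (s * x)).
  by apply: measurable_funM => //; exact: measurable_truncsqr_scale.
have dom x : I x -> `|cos (s * x) - 1| <= 2 * truncsqr (s * x).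
  by rewrite ler0_norm ?subr_le0 ?cos_le1// opprB one_sub_cos_le_truncsqr.
have int_le : (\int[mu]_(x in I) (2 * truncsqr (s * x))%:E <= (2 * B)%:E)%E.
  under eq_integral do rewrite EFinM.
  rewrite ge0_integralZl_EFin//; last 2 first.
  - by move=> x _; rewrite lee_fin truncsqr_ge0.
  - by apply/measurable_EFinP; exact: measurable_truncsqr_scale.
  by rewrite EFinM lee_pmul2l.
have [icos norm_le] :=
  integrable_norm_Rintegral_le (measurable_itv _) mcos mh dom int_le.
have re_le0 : psi_re mu s <= 0.
  apply: fine_le0; rewrite -(integral0 mu I).
  apply: le_integral => //; first exact: integrable0.
  by move=> x _; rewrite lee_fin subr_le0 cos_le1.
by split=> //; rewrite -ler0_norm.
Qed.

Lemma norm_psi_im_le s e B L : 0 <= s -> 0 < e ->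
  (\int[mu]_(x in I) (truncsqr (s * x))%:E <= B%:E)%E ->
  (\int[mu]_(x in I) (x ^+ 2)%:E <= L%:E)%E ->
  `|psi_im mu s| <= 2 * s * e * B + 2 * s / e * L.
Proof.
move=> s_ge0 e_gt0 moment_le sqr_le.
have c1 : 0 <= 2 * s * e by rewrite !mulr_ge0// ltW.
have c2 : 0 <= 2 * s / e by rewrite divr_ge0 ?mulr_ge0// ltW.
have mlin : measurable_fun I (fun x : R => s * x) by exact: measurable_funM.
have msin : measurable_fun I (fun x : R => sin (s * x) - s * x).
  apply: measurable_funB => //; apply: (measurableT_comp (f := sin)) => //.
  exact: continuous_measurable_fun (@continuous_sin R).
have mt := @measurable_truncsqr_scale I s.
have msqr : measurable_fun I (fun x : R => x ^+ 2).
  by apply: measurable_funX; exact: measurable_id.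
have mh : measurable_fun I
    (fun x => 2 * s * e * truncsqr (s * x) + 2 * s / e * x ^+ 2).
  by apply: measurable_funD; exact: measurable_funM.
have dom x : I x -> `|sin (s * x) - s * x| <=
    2 * s * e * truncsqr (s * x) + 2 * s / e * x ^+ 2.
  by rewrite [2 * s / e * _]mulrAC norm_sin_sub_id_scale_le.
suff int_le : (\int[mu]_(x in I)
    (2 * s * e * truncsqr (s * x) + 2 * s / e * x ^+ 2)%:E <=
    (2 * s * e * B + 2 * s / e * L)%:E)%E.
  exact: (integrable_norm_Rintegral_le (measurable_itv _) msin mh dom int_le).2.
under eq_integral do rewrite EFinD !EFinM.
rewrite ge0_integralD//; last 4 first.
- by move=> x _; rewrite -EFinM lee_fin mulr_ge0 ?truncsqr_ge0.
- by apply: emeasurable_funM => //; exact/measurable_EFinP.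
- by move=> x _; rewrite -EFinM lee_fin mulr_ge0 ?sqr_ge0.
- by apply: emeasurable_funM => //; exact/measurable_EFinP.
rewrite !ge0_integralZl_EFin//; last 4 first.
- by move=> x _; rewrite lee_fin sqr_ge0.
- exact/measurable_EFinP.
- by move=> x _; rewrite lee_fin truncsqr_ge0.
- exact/measurable_EFinP.
by rewrite EFinD !EFinM leeD// lee_wpmul2l// lee_fin.
Qed.

Lemma norm_psi_im_le_pow s alpha K L : 1 <= s -> 0 < alpha ->
  (\int[mu]_(x in I) (truncsqr (s * x))%:E <= (K * s `^ alpha)%:E)%E ->
  (\int[mu]_(x in I) (x ^+ 2)%:E <= L%:E)%E ->
  `|psi_im mu s| <= (2 * K + 2 * L) * s `^ (1 + alpha / 2).
Proof.
move=> s_ge1 alpha_gt0 moment_le sqr_le.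
have s_gt0 : 0 < s by exact: lt_le_trans s_ge1.
have e_gt0 : 0 < s `^ (- (alpha / 2)) by exact: powR_gt0.
apply: le_trans (norm_psi_im_le (ltW s_gt0) e_gt0 moment_le sqr_le) _.
have s1 : s = s `^ 1 by rewrite powRr1// ltW.
have s_mul : s * s `^ (- (alpha / 2)) * s `^ alpha = s `^ (1 + alpha / 2).
  by rewrite {1}s1 -!gt0_powRD//; congr (_ `^ _); lra.
have s_div : s / s `^ (- (alpha / 2)) = s `^ (1 + alpha / 2).
  by rewrite powRN invrK {1}s1 -gt0_powRD.
have -> : (2 * K + 2 * L) * s `^ (1 + alpha / 2) =
    2 * K * (s * s `^ (- (alpha / 2)) * s `^ alpha) +
    2 * L * (s / s `^ (- (alpha / 2))).
  by rewrite s_mul s_div; ring.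
by rewrite le_eqVlt; apply/orP; left; apply/eqP; ring.
Qed.

Lemma levy_measure_sqr_moment :
  levy_measure mu ->
  exists L, (\int[mu]_(x in I) (x ^+ 2)%:E = L%:E)%E.
Proof.
move=> [_ levy_int].
have sqr_fin : (\int[mu]_(x in I) (x ^+ 2)%:E < +oo)%E.
  apply: le_lt_trans levy_int.
  apply: (@le_trans _ _ (\int[mu]_(x in I) (truncsqr x)%:E)%E).
    apply: ge0_le_integral => //.
    - by move=> x _; rewrite lee_fin sqr_ge0.
    - by apply/measurable_EFinP; apply: measurable_funX; exact: measurable_id.
    - by apply/measurable_EFinP; exact: measurable_truncsqr.
    - move=> x; rewrite /= in_itv /= => x_in; rewrite lee_fin truncsqr_small//.
      by rewrite ler_norml.
  apply: ge0_subset_integral => //.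
  - by apply/measurable_EFinP; exact: measurable_truncsqr.
  - by move=> x _; rewrite lee_fin truncsqr_ge0.
exists (fine (\int[mu]_(x in I) (x ^+ 2)%:E)%E).
by rewrite fineK// ge0_fin_numE// integral_ge0// => x _; rewrite lee_fin sqr_ge0.
Qed.

End levy_measure_bounds.


Lemma smooth_continuous {R : realType} (f : R -> R) : smooth f -> continuous f.
Proof.
move=> f_smooth x; apply/differentiable_continuous/derivable1_diffP.
exact: (f_smooth 0%N x).
Qed.

Unset Implicit Arguments.

Theorem proposition4p3 (R : realType) (d : measure_display) (T : measurableType d)
  (P : probability T R) (mu : {measure set R -> \bar R}) (M : R -> T -> R)
  (alpha : R) (f : R -> R) :
  levy_measure mu ->
  supp_in_unit mu ->
  0 < alpha < 2 ->
  (exists C delta : R, 0 < delta /\ forall v : R, 0 < v < delta ->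
     (\int[mu]_(x in `[(- v)%R, v]) (x ^+ 2)%:E <= (C * v `^ (2 - alpha))%:E)%E) ->
  levy_process P M ->
  (forall t, 0 <= t -> has_levy_charfun P mu t (M t)) ->
  smooth f ->
  (forall x, `|x| <= 1 -> f x = x ^+ 2) ->
  (forall x, 2 < `|x| -> f x = 0) ->
  (forall x, 1 < `|x| <= 2 -> 0 <= f x <= 2) ->
  forall beta : R, 0 < beta < 1 / 2 ->
  exists C delta : R, 0 < delta /\ forall t : R, 0 < t < delta ->
    (`| \int[P]_(w in setT) (rescale f (t `^ beta) (M t w))%:E |
       <= (C * t `^ (1 + beta * (2 - alpha)))%:E)%E.
Proof.
move=> levy_mu _ alpha_bounds [C [delta [delta_gt0 small_moment]]] [M_meas _]
  charfun f_smooth f_small f_large f_mid beta /andP[beta_gt0 beta_lt].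
have [L moment] := levy_measure_sqr_moment levy_mu.
have moment_le : (\int[mu]_(x in `[(-1)%R, 1%R]) (x ^+ 2)%:E <= L%:E)%E.
  by rewrite moment.
have [K moment_pow] :=
  truncated_moment_le_pow alpha_bounds delta_gt0 small_moment moment_le.
exists (6 * (2 * K) + 3 * (2 * K + 2 * L) ^+ 2), 1; split=> // t /andP[t_gt0 t_lt1].
have v_gt0 : 0 < t `^ beta by exact: powR_gt0.
have mf := continuous_measurable_fun (smooth_continuous f_smooth).
apply: le_trans (expectation_rescale_le P mf (M_meas t (ltW t_gt0))
  (bump_le_one_sub_cos f_small f_large f_mid) v_gt0) _.
rewrite (charfun t (ltW t_gt0) _).1 lee_fin -powRN.
have u_ge1 : 1 <= t `^ (- beta).
  rewrite -(powRr0 t); apply: ger_powR; first by rewrite t_gt0 ltW.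
  by rewrite oppr_le0 ltW.
have moment_u := moment_pow _ (lt_le_trans ltr01 u_ge1).
have [re_le0 re_le] := psi_re_bounds moment_u.
have im_le := norm_psi_im_le_pow u_ge1 (proj1 (andP alpha_bounds)) moment_u moment_le.
rewrite -!powRrM in re_le im_le; rewrite mulrA in re_le.
by apply: rescaled_defect_le => //; [rewrite t_gt0|lra].
Qed.
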